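(* Let $(E,B,p,\Gamma)$ be a compact graph bundle and $M\subseteq E$ a compact set. If $\operatorname{End}_s(M)=M$, then $M$ is nowhere dense in $E$.
   Context: Compact graph bundle $(E,B,p,\Gamma)$: $E,B$ compact metric, $\Gamma$ a graph (finite union of arcs pairwise disjoint or meeting only at end-points), $p:E\to B$ continuous surjection, locally trivial via homeomorphisms $h:p^{-1}(U)\to U\times\Gamma$ with $\mathrm{pr}_1\circ h=p$ (canonical). Open $n$-star $\Sigma_n$: $n$-star minus its $n$ end-points. Full sub-star: for $N\ge n\ge2$, an open star $\Sigma_n\subseteq\Sigma_N$ with the same central point that is the union of $n$ of the $N$ half-closed branches of $\Sigma_N$. For $E=B\times\Gamma$, $p=\mathrm{pr}_1$, $M$ closed: $x=(x_1,x_2)\in M$ is a strongly star-like interior point if $\operatorname{ord}(x_2,\Gamma)=N\ge2$ and there exist open $O\ni x_1$ in $B$ and an open $N$-star $\Sigma_N\subseteq\Gamma$, an open neighbourhood of $x_2$ with central point $x_2$, with $\mathcal G=M\cap(O\times\Sigma_N)$ satisfying $\mathcal G\cap(\{x_1\}\times\Gamma)=\{x_1\}\times\Sigma_k$, $k\ge2$, $\Sigma_k$ a full sub-star of $\Sigma_N$, and for every $z\in p(\mathcal G)$, $\mathcal G\cap(\{z\}\times\Gamma)=\{z\}\times\Sigma_{k(z),z}$, $2\le k(z)\le k$, $\Sigma_{k(z),z}$ a full sub-star of $\Sigma_k$; in general bundles transferred via canonical homeomorphisms. $\operatorname{Lint}_s(M)$ is the set of such points and $\operatorname{End}_s(M)=M\setminus\operatorname{Lint}_s(M)$.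 *)

From HB Require Import structures.
From mathcomp Require Import all_boot all_order all_algebra.
From mathcomp Require Import all_classical all_reals all_analysis.
Set Implicit Arguments. Unset Strict Implicit. Unset Printing Implicit Defensive.
Import Order.TTheory GRing.Theory Num.Theory.
Import numFieldNormedType.Exports.
Local Open Scope classical_set_scope.
Local Open Scope ring_scope.

Section Defs.
Variable R : realType.

Definition unit_seg : set R := [set s | 0 <= s <= 1].
Definition unit_seg_ho : set R := [set s | 0 <= s < 1].

(* an arc in X: a continuous injective map of [0,1] (an embedding since
   [0,1] is compact and X Hausdorff) *)
Definition is_arc (X : topologicalType) (a : R -> X) : Prop :=
  {within unit_seg, continuous a} /\
  (forall s t, unit_seg s -> unit_seg t -> a s = a t -> s = t).

Definition is_graph (X : topologicalType) : Prop :=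
  exists (m : nat) (a : 'I_m -> R -> X),
    (forall i, is_arc (a i)) /\
    (\bigcup_i (a i @` unit_seg) = [set: X]) /\
    (forall i j, i != j ->
       (a i @` unit_seg) `&` (a j @` unit_seg) `<=`
       ([set a i 0; a i 1] `&` [set a j 0; a j 1])).

(* Menger--Urysohn order: ord(x, X) <= n *)
Definition ord_le (X : topologicalType) (x : X) (n : nat) : Prop :=
  forall U, nbhs x U -> exists V : set X, [/\ open V, V x, V `<=` U &
     exists f : 'I_n -> X, closure V `\` V `<=` range f].

Definition ord_eq (X : topologicalType) (x : X) (N : nat) : Prop :=
  ord_le x N /\ forall m, ord_le x m -> (N <= m)%N.

Definition star_data (X : topologicalType) (c : X) (N : nat)
    (b : 'I_N -> R -> X) : Prop :=
  (forall i, is_arc (b i)) /\ (forall i, b i 0 = c) /\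
  (forall i j, i != j -> (b i @` unit_seg) `&` (b j @` unit_seg) = [set c]).

Definition branch (X : topologicalType) (N : nat) (b : 'I_N -> R -> X)
    (i : 'I_N) : set X := b i @` unit_seg_ho.

(* the union of the branches indexed by I; for I = setT this is the open
   N-star (the N-star minus its N end-points), and for #|I| >= 2 it is a
   full sub-star of it *)
Definition sub_star (X : topologicalType) (N : nat) (b : 'I_N -> R -> X)
    (I : {set 'I_N}) : set X := \bigcup_(i in [set i | i \in I]) branch b i.

Definition open_star (X : topologicalType) (N : nat) (b : 'I_N -> R -> X)
  : set X := sub_star b [set: 'I_N].

Definition local_triv (E B G : topologicalType) (p : E -> B) (U : set B)
    (h : E -> B * G) (g : B * G -> E) : Prop :=
  open U /\ (forall y, U (p y) -> (h y).1 = p y) /\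
  [/\
      (forall y, U (p y) -> g (h y) = y),
      (forall z, U z.1 -> h (g z) = z /\ U (p (g z))),
      {within p @^-1` U, continuous h} &
      {within [set z | U z.1], continuous g}].

Definition compact_graph_bundle (E B G : pseudoMetricType R) (p : E -> B)
  : Prop :=
  [/\ hausdorff_space E /\ compact [set: E],
      hausdorff_space B /\ compact [set: B],
      hausdorff_space G /\ is_graph G,
      continuous p /\ (forall b, exists y, p y = b) &
      forall b : B, exists U h g, U b /\ @local_triv E B G p U h g].

Definition Lint_s (E B G : pseudoMetricType R) (p : E -> B) (M : set E)
    (x : E) : Prop :=
  M x /\
  exists (U : set B) (h : E -> B * G) (g : B * G -> E),
    [/\ U (p x), local_triv p U h g &
    let HM := h @` (M `&` p @^-1` U) in
    let x1 := (h x).1 in let x2 := (h x).2 in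
    exists (N : nat) (O : set B) (b : 'I_N -> R -> G) (I : {set 'I_N}),
      [/\ ord_eq x2 N /\ (2 <= N)%N,
          open O /\ O x1 /\ O `<=` U,
          star_data x2 b, open (open_star b) &
          let GG := HM `&` [set z | O z.1 /\ open_star b z.2] in
          [/\ (2 <= #|I|)%N,
              (forall t, GG (x1, t) <-> sub_star b I t) &
              forall z, (exists t, GG (z, t)) ->
                exists J : {set 'I_N}, [/\ J \subset I, (2 <= #|J|)%N &
                  forall t, GG (z, t) <-> sub_star b J t]]]].

Definition End_s (E B G : pseudoMetricType R) (p : E -> B) (M : set E)
  : set E := M `\` [set x | @Lint_s E B G p M x].

End Defs.

From HB Require Import structures.
From mathcomp Require Import all_boot all_order all_algebra.
From mathcomp Require Import all_classical all_reals all_analysis.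
From mathcomp Require Import ring lra zify.
Set Implicit Arguments. Unset Strict Implicit. Unset Printing Implicit Defensive.
Import Order.TTheory GRing.Theory Num.Theory.
Import numFieldNormedType.Exports.
Local Open Scope classical_set_scope.
Local Open Scope ring_scope.

(* Suppose x lies in the interior of M. A local trivialisation turns a
   neighbourhood of x inside M into a box O x A of the chart, and the open set
   A of the graph contains a short open arc a(s - e, s + e) around a point
   a(s) interior to one of the arcs a of the graph: an open 2-star whose centre
   has order 2. The box O x a(s - e, s + e) then lies in M, so its centre is a
   strongly star-like interior point of M, which End_s(M) = M forbids.
   Compactness of M is only used to know that M is closed. *)

Section RealArcs.
Variable R : realType.

Definition ball_continuous_on (X : topologicalType) (a : R -> X) (A : set R)
  : Prop :=
  forall t, A t -> forall W, nbhs (a t) W ->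
  exists2 d : R, 0 < d & forall u, A u -> `|u - t| < d -> W (a u).

Lemma within_continuousP (X : topologicalType) (a : R -> X) (A : set R) :
  {within A, continuous a} <-> ball_continuous_on a A.
Proof.
split=> [/subspace_continuousP ca t At W nW | ca].
  have /nbhs_ballP [d d0 Hd] := ca t At W nW.
  by exists d => // u Au tu; apply: Hd => //; rewrite /ball /= distrC.
apply/subspace_continuousP => t At W nW.
have [d d0 Hd] := ca t At W nW.
apply/nbhs_ballP; exists d => // u; rewrite /ball /= => tu Au.
by apply: Hd => //; rewrite distrC.
Qed.

Lemma pos_below2 (x y : R) : 0 < x -> 0 < y -> exists2 z, 0 < z & z < x /\ z < y.
Proof.
move=> x0 y0; have [xy|yx] := leP x y.
  by exists (x / 2); [lra | split; lra].
by exists (y / 2); [lra | split; lra].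
Qed.

(* The infimum of the points of [c, d] mapped outside V is mapped to the
   frontier of V, and it is not c because V is open. *)
Lemma exit_point (X : topologicalType) (phi : R -> X) (c d : R) (V : set X) :
  c < d -> ball_continuous_on phi [set t | c <= t <= d] ->
  open V -> V (phi c) -> ~ V (phi d) ->
  exists t, [/\ c < t <= d, closure V (phi t) & ~ V (phi t)].
Proof.
move=> cd cont oV Vc nVd.
set S := [set t | c <= t <= d /\ ~ V (phi t)].
have Slb : lbound S c by move=> t [/andP[]].
have Sd : S d by split=> //; rewrite lexx ltW.
have hinf : has_inf S by split; [exists d | exists c].
have inf_le t : S t -> inf S <= t by apply: (ge_inf (ex_intro _ c Slb)).
set ti := inf S.
have cti : c <= ti by apply: lb_le_inf; case: hinf.
have tid : ti <= d := inf_le d Sd.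
have ctid : c <= ti <= d by rewrite cti tid.
have nVti : ~ V (phi ti).
  move=> Vti.
  have [e e0 He] := cont ti ctid V (open_nbhs_nbhs (conj oV Vti)).
  have [s Ss ste] := inf_adherent e0 hinf.
  have tis := inf_le s Ss.
  case: Ss => /andP[cs sd] nVs; apply: nVs; apply: He; first by rewrite /= cs.
  rewrite ger0_norm ?subr_ge0 //; lra.
have cti' : c < ti.
  by rewrite lt_neqAle cti andbT; apply/eqP => ecti; apply: nVti; rewrite -ecti.
exists ti; split=> //; first by rewrite cti' tid.
move=> W nW.
have [e e0 He] := cont ti ctid W nW.
set u := Num.max c (ti - e / 2).
have cu : c <= u by rewrite le_max lexx.
have uti : u < ti by rewrite gt_max cti' /=; lra.
have tiu : ti - e / 2 <= u by rewrite le_max lexx orbT.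
exists (phi u); split.
- apply: contrapT => nVu.
  have : ti <= u by apply: inf_le; split=> //; rewrite cu /=; lra.
  lra.
- by apply: He; [rewrite /= cu /=; lra | rewrite ltr0_norm ?subr_lt0 //; lra].
Qed.

Lemma exit_point_rev (X : topologicalType) (phi : R -> X) (c d : R) (V : set X) :
  c < d -> ball_continuous_on phi [set t | c <= t <= d] ->
  open V -> V (phi d) -> ~ V (phi c) ->
  exists t, [/\ c <= t < d, closure V (phi t) & ~ V (phi t)].
Proof.
move=> cd cont oV Vd nVc.
have [t [/andP[ct td] clt nVt]] : exists t,
    [/\ c < t <= d, closure V (phi (c + d - t)) & ~ V (phi (c + d - t))].
  apply: (@exit_point X (fun u => phi (c + d - u)) c d V cd _ oV).
  - move=> t /andP[ct td] W nW.
    have [e e0 He] := cont (c + d - t) (ltac:(apply/andP; split; lra)) W nW.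
    exists e => // u /andP[cu ud] ut; apply: He; first by apply/andP; split; lra.
    by rewrite (_ : c + d - u - (c + d - t) = - (u - t)) ?normrN //; ring.
  - by rewrite (_ : c + d - c = d) //; ring.
  - by rewrite (_ : c + d - d = c) //; ring.
by exists (c + d - t); split=> //; apply/andP; split; lra.
Qed.

Lemma arc_inj (X : topologicalType) (a : R -> X) s t :
  is_arc a -> 0 <= s <= 1 -> 0 <= t <= 1 -> a s = a t -> s = t.
Proof. by move=> [_ ia] hs ht; apply: ia. Qed.

Lemma arc_ball_continuous (X : topologicalType) (a : R -> X) (c d : R) :
  is_arc a -> 0 <= c -> d <= 1 -> ball_continuous_on a [set t | c <= t <= d].
Proof.
move=> [/within_continuousP ca _] c0 d1 t /andP[ct td] W nW.
have [e e0 He] := ca t (ltac:(apply/andP; split; lra)) W nW.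
by exists e => // u /andP[cu ud]; apply: He; apply/andP; split; lra.
Qed.

Lemma arc_segment_closed (X : topologicalType) (a : R -> X) (c d : R) :
  hausdorff_space X -> is_arc a -> 0 <= c -> d <= 1 ->
  closed (a @` [set t | c <= t <= d]).
Proof.
move=> hX [ca _] c0 d1; apply: compact_closed => //.
have -> : [set t | c <= t <= d] = `[c, d]%classic.
  by apply/seteqP; split=> t /=; rewrite in_itv.
apply: continuous_compact; last exact: segment_compact.
apply: continuous_subspaceW ca => t /=; rewrite in_itv /= => /andP[ct td].
by apply/andP; split; lra.
Qed.

Lemma is_arc_affine (X : topologicalType) (a : R -> X) (s k : R) :
  is_arc a -> k != 0 -> (forall t, 0 <= t <= 1 -> 0 <= s + k * t <= 1) ->
  is_arc (fun t => a (s + k * t)).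
Proof.
move=> [/within_continuousP ca ia] k0 hk; split.
- apply/within_continuousP => t t01 W nW.
  have [d d0 Hd] := ca _ (hk t t01) W nW.
  have k0' : 0 < `|k| by rewrite normr_gt0.
  exists (d / `|k|); first exact: divr_gt0.
  move=> u u01 ut; apply: Hd; first exact: hk.
  rewrite (_ : s + k * u - (s + k * t) = k * (u - t)); last by ring.
  by rewrite normrM mulrC -ltr_pdivlMr.
- move=> u v hu hv /(ia _ _ (hk _ hu) (hk _ hv)) e.
  by apply: (mulfI k0); apply: (addrI s).
Qed.

Definition branch_slope (e : R) (k : 'I_2) : R := if val k == 0%N then e else - e.

Definition arc_star (X : topologicalType) (a : R -> X) (s e : R) :
  'I_2 -> R -> X := fun k t => a (s + branch_slope e k * t).

Lemma arc_star_data (X : topologicalType) (a : R -> X) (s e : R) :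
  is_arc a -> 0 < e -> 0 <= s - e -> s + e <= 1 ->
  star_data (a s) (arc_star a s e).
Proof.
move=> harc e0 se1 se2; split; [|split].
- move=> k; apply: is_arc_affine => //.
    by rewrite /branch_slope; case: ifP => _; rewrite ?oppr_eq0 gt_eqF.
  by move=> t /andP[t0 t1]; rewrite /branch_slope; case: ifP => _;
    apply/andP; split; nra.
- by move=> k; rewrite /arc_star mulr0 addr0.
- move=> j k jk; apply/seteqP; split; last first.
    by move=> z ->; split; exists 0; rewrite /arc_star ?mulr0 ?addr0 //;
      rewrite /unit_seg /= lexx ler01.
  move=> z [[t /andP[t0 t1] <-] [u /andP[u0 u1] eq]].
  have := arc_inj harc _ _ eq.
  case: j k jk eq => [[|[|jj]] jp] [[|[|kk]] kp] //= _ eq;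
    rewrite /arc_star /branch_slope /= in eq * => h.
  + have : s + - e * u = s + e * t by apply: h; apply/andP; split; nra.
    have -> : t = 0 by nra.
    by rewrite mulr0 addr0.
  + have : s + e * u = s + - e * t by apply: h; apply/andP; split; nra.
    have -> : t = 0 by nra.
    by rewrite mulr0 addr0.
Qed.

Lemma open_star_arc_star (X : topologicalType) (a : R -> X) (s e : R) :
  0 < e -> open_star (arc_star a s e) = a @` [set t | s - e < t < s + e].
Proof.
move=> e0; apply/seteqP; split.
  move=> z [k _ [t /andP[t0 t1] <-]]; exists (s + branch_slope e k * t) => //.
  by rewrite /branch_slope; case: ifP => _; apply/andP; split; nra.
move=> z [t /andP[lt ut] <-].
have [st|ts] := leP s t.
- exists ord0; first by rewrite /= inE.
  exists ((t - s) / e).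
    apply/andP; split; first by apply: divr_ge0; lra.
    by rewrite ltr_pdivrMr //; lra.
  rewrite /arc_star /branch_slope /= mulrC divfK ?gt_eqF //.
  by congr a; ring.
- exists ord_max; first by rewrite /= inE.
  exists ((s - t) / e).
    apply/andP; split; first by apply: divr_ge0; lra.
    by rewrite ltr_pdivrMr //; lra.
  rewrite /arc_star /branch_slope /= mulNr mulrC divfK ?gt_eqF //.
  by congr a; ring.
Qed.

Section Graph.
Variables (X : topologicalType) (m : nat) (a : 'I_m -> R -> X).
Hypotheses (hX : hausdorff_space X) (harc : forall i, is_arc (a i))
  (hcov : \bigcup_i (a i @` @unit_seg R) = [set: X])
  (hint : forall i j, i != j ->
       (a i @` @unit_seg R) `&` (a j @` @unit_seg R) `<=`
       ([set a i 0; a i 1] `&` [set a j 0; a j 1])).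

(* The complement of a i (c, d) is the finite union of the other arcs and of
   a i [0, c] and a i [d, 1], all compact. *)
Lemma arc_interval_open i (c d : R) :
  0 < c -> c < d -> d < 1 -> open (a i @` [set t | c < t < d]).
Proof.
move=> c0 cd d1.
have -> : a i @` [set t | c < t < d] =
   ~` ((\bigcup_(j in [set j | j != i]) (a j @` @unit_seg R)) `|`
       (a i @` [set t | 0 <= t <= c] `|` a i @` [set t | d <= t <= 1])).
  apply/seteqP; split.
  - move=> z [t /andP[ct td] <-].
    have t01 : 0 <= t <= 1 by apply/andP; split; lra.
    case=> [[j /= ji [u u01 eq]]|[[u /andP[u0 uc] eq]|[u /andP[du u1] eq]]].
    + have := hint ji (t := a i t); case.
        by split; [exists u | exists t].
      have z01 : 0 <= (0 : R) <= 1 by rewrite lexx ler01.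
      have o01 : 0 <= (1 : R) <= 1 by rewrite lexx ler01.
      move=> _ /= [] /(arc_inj (harc i) t01).
      * by move=> /(_ z01); lra.
      * by move=> /(_ o01); lra.
    + have u01 : 0 <= u <= 1 by apply/andP; split; lra.
      by have := arc_inj (harc i) u01 t01 eq; lra.
    + have u01 : 0 <= u <= 1 by apply/andP; split; lra.
      by have := arc_inj (harc i) u01 t01 eq; lra.
  - move=> z nC.
    have : [set: X] z by [].
    rewrite -hcov; case=> j _ [t /andP[t0 t1] eq].
    have [ji|ji] := eqVneq j i; last first.
      by exfalso; apply: nC; left; exists j => //; exists t => //; apply/andP.
    subst j; exists t => //.
    have [tc|ct] := leP t c.
      by exfalso; apply: nC; right; left; exists t => //; apply/andP.
    have [dt|td] := leP d t.
      by exfalso; apply: nC; right; right; exists t => //; apply/andP.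
    by apply/andP.
apply: closed_openC; apply: closedU.
  apply: closed_bigcup; first exact: finite_finset.
  by move=> j _; apply: arc_segment_closed => //; lra.
by apply: closedU; apply: arc_segment_closed => //; lra.
Qed.

Lemma ord_le_arc_interior i (s : R) : 0 < s < 1 -> ord_le (a i s) 2.
Proof.
move=> /andP[s0 s1] U nU.
have s01 : 0 <= s <= 1 by apply/andP; split; lra.
have [d d0 Hd] := (within_continuousP _ _).1 (harc i).1 s s01 U nU.
have [e e0 [es es1]] := pos_below2 s0 (ltac:(lra) : 0 < 1 - s).
have [d' d'0 [d'd d'e]] := pos_below2 d0 e0.
exists (a i @` [set t | s - d' < t < s + d']); split.
- by apply: arc_interval_open; lra.
- by exists s => //; apply/andP; split; lra.
- move=> z [t /andP[t1 t2] <-]; apply: Hd; first by apply/andP; split; lra.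
  by rewrite ltr_norml; apply/andP; split; lra.
exists (fun k : 'I_2 => if val k == 0%N then a i (s - d') else a i (s + d')).
move=> z [cz nVz].
have cl : closed (a i @` [set t | s - d' <= t <= s + d']).
  by apply: arc_segment_closed => //; lra.
have : (a i @` [set t | s - d' <= t <= s + d']) z.
  rewrite ((closure_id _).1 cl); apply: (closureS _ cz).
  by move=> w [t /andP[t1 t2] <-]; exists t => //; apply/andP; split; lra.
case=> t /andP[t1 t2] tz.
have [e1|h1] := eqVneq t (s - d'); first by exists ord0; rewrite //= -tz e1.
have [e2|h2] := eqVneq t (s + d'); first by exists ord_max; rewrite //= -tz e2.
exfalso; apply: nVz; exists t => //.
by apply/andP; split; rewrite lt_neqAle ?t1 ?t2 ?andbT // eq_sym.
Qed.

(* A neighbourhood V inside a i (s - e, s + e) has a frontier point on each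
   side of a i s, so no map 'I_n -> X with n < 2 covers its frontier. *)
Lemma ord_arc_interior_ge2 i (s : R) n :
  0 < s < 1 -> ord_le (a i s) n -> (2 <= n)%N.
Proof.
move=> /andP[s0 s1] H; case: (leqP 2 n) => // nlt2; exfalso.
have [e e0 [es es1]] := pos_below2 s0 (ltac:(lra) : 0 < 1 - s).
set U0 := a i @` [set t | s - e < t < s + e].
have oU0 : open U0 by apply: arc_interval_open; lra.
have U0s : U0 (a i s) by exists s => //; apply/andP; split; lra.
have [V [oV Vs VU [f hf]]] := H U0 (open_nbhs_nbhs (conj oU0 U0s)).
have nVr t : ~ (s - e < t < s + e) -> 0 <= t <= 1 -> ~ V (a i t).
  move=> nt t01 /VU [u /andP[u1 u2] eq].
  have u01 : 0 <= u <= 1 by apply/andP; split; lra.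
  by apply: nt; rewrite -(arc_inj (harc i) u01 t01 eq) u1 u2.
have [t1 [/andP[st1 t1e] c1 n1]] :
    exists t, [/\ s < t <= s + e, closure V (a i t) & ~ V (a i t)].
  apply: exit_point => //; first lra.
  - by apply: arc_ball_continuous => //; lra.
  - by apply: nVr; [move=> /andP[_]; lra | apply/andP; split; lra].
have [t2 [/andP[t2e st2] c2 n2]] :
    exists t, [/\ s - e <= t < s, closure V (a i t) & ~ V (a i t)].
  apply: exit_point_rev => //; first lra.
  - by apply: arc_ball_continuous => //; lra.
  - by apply: nVr; [move=> /andP[]; lra | apply/andP; split; lra].
have [k1 _ fk1] := hf _ (conj c1 n1).
have [k2 _ fk2] := hf _ (conj c2 n2).
have k12 : k1 = k2.
  have := ltn_ord k1; have := ltn_ord k2 => k2n k1n.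
  by apply: val_inj => /=; lia.
have t101 : 0 <= t1 <= 1 by apply/andP; split; lra.
have t201 : 0 <= t2 <= 1 by apply/andP; split; lra.
have := arc_inj (harc i) t101 t201; rewrite -fk1 -fk2 k12 => /(_ erefl); lra.
Qed.

Lemma ord_eq_arc_interior i (s : R) : 0 < s < 1 -> ord_eq (a i s) 2.
Proof.
by move=> s01; split=> [|n]; [exact: ord_le_arc_interior | exact: ord_arc_interior_ge2].
Qed.

Lemma nbhs_arc_interval (x : X) (A : set X) : nbhs x A ->
  exists i s e, [/\ 0 < e, 0 < s - e, s + e < 1 &
    forall t, s - e < t < s + e -> A (a i t)].
Proof.
move=> nA.
have : [set: X] x by [].
rewrite -hcov; case=> i _ [s0 s001 hx]; subst x.
have [d d0 Hd] := (within_continuousP _ _).1 (harc i).1 s0 s001 A nA.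
case/andP: s001 => s00 s01.
suff [s /andP[sa sb] sd] : exists2 s, 0 < s < 1 & `|s - s0| < d.
  have [e1 e10 [e1a e1b]] := pos_below2 sa (ltac:(lra) : 0 < 1 - s).
  have [e e0 [ea eb]] := pos_below2 e10 (ltac:(lra) : 0 < d - `|s - s0|).
  exists i, s, e; split; try lra.
  move=> t /andP[t1 t2]; apply: Hd; first by apply/andP; split; lra.
  have /andP[hw1 hw2] : - `|s - s0| <= s - s0 <= `|s - s0| by rewrite -ler_norml.
  by rewrite ltr_norml; apply/andP; split; lra.
have [eta eta0 [etad eta4]] := pos_below2 d0 (ltac:(lra) : (0:R) < 1/4).
have [sl|sh] := ltP s0 (1/2).
- exists (s0 + eta); first by apply/andP; split; lra.
  by rewrite (_ : s0 + eta - s0 = eta) ?gtr0_norm //; ring.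
- exists (s0 - eta); first by apply/andP; split; lra.
  by rewrite (_ : s0 - eta - s0 = - eta) ?normrN ?gtr0_norm //; ring.
Qed.

End Graph.

Lemma graph_open_star_nbhs (X : topologicalType) (x : X) (A : set X) :
  hausdorff_space X -> is_graph R X -> nbhs x A ->
  exists y (b : 'I_2 -> R -> X),
    [/\ ord_eq y 2, star_data y b, open (open_star b) & open_star b `<=` A].
Proof.
move=> hX [m [a [harc [hcov hint]]]].
move=> /(nbhs_arc_interval harc hcov) [i [s [e [e0 se1 se2 HA]]]].
exists (a i s), (arc_star (a i) s e); split.
- by apply: (ord_eq_arc_interior hX harc hcov hint); apply/andP; split; lra.
- by apply: arc_star_data => //; lra.
- by rewrite open_star_arc_star //; apply: arc_interval_open => //; lra.
- by rewrite open_star_arc_star // => z [t ht <-]; exact: HA.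
Qed.

End RealArcs.

Section Bundle.
Variable R : realType.

Lemma nbhs_prod_box (B G : topologicalType) (z : B * G) (A : set (B * G)) :
  nbhs z A -> exists A1 A2, [/\ nbhs z.1 A1, nbhs z.2 A2 & A1 `*` A2 `<=` A].
Proof. by case=> /= -[A1 A2] /= [n1 n2] sub; exists A1, A2. Qed.

Lemma nbhs_fst (B G : topologicalType) (z : B * G) (U : set B) :
  nbhs z.1 U -> nbhs z [set w | U w.1].
Proof.
move=> nU; exists (U, setT) => //=; first by split=> //; exact: filterT.
by move=> [w1 w2] /= [].
Qed.

Lemma local_triv_nbhs (E B G : topologicalType) (p : E -> B) (U : set B)
    (h : E -> B * G) (g : B * G -> E) (x : E) (A : set E) :
  local_triv p U h g -> U (p x) -> nbhs x A ->
  nbhs (h x) [set z | U z.1 /\ A (g z)].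
Proof.
move=> [oU [h1 [gh _ _ cg]]] Upx nA.
have Uhx : U (h x).1 by rewrite h1.
have nU : nbhs (h x) [set z | U z.1].
  by apply: nbhs_fst; apply: open_nbhs_nbhs.
have nAx : nbhs (g (h x)) A by rewrite gh.
have nAg := (subspace_continuousP _ _).1 cg (h x) Uhx A nAx.
by apply: filterS (filterI nU nAg) => z [Uz Az]; split=> //; exact: Az.
Qed.

Lemma Lint_s_product_star (E B G : pseudoMetricType R) (p : E -> B)
    (M : set E) (U : set B) (h : E -> B * G) (g : B * G -> E) (O : set B)
    (x1 : B) (y : G) (N : nat) (b : 'I_N -> R -> G) :
  local_triv p U h g -> open O -> O `<=` U -> O x1 ->
  ord_eq y N -> (2 <= N)%N -> star_data y b -> open (open_star b) ->
  (forall z t, O z -> open_star b t -> M (g (z, t))) ->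
  @Lint_s R E B G p M (g (x1, y)).
Proof.
move=> tr oO OU Ox1 oy N2 sb ob OM.
have [_ [_ [_ hg _ _]]] := tr.
have in_chart z t : O z -> open_star b t ->
    exists2 w, (M `&` p @^-1` U) w & h w = (z, t).
  move=> Oz st; have [hzt Uzt] := hg (z, t) (OU _ Oz).
  by exists (g (z, t)) => //; split=> //; exact: OM.
have yb : open_star b y.
  have [_ [b0 _]] := sb.
  exists (Ordinal (ltnW N2)); first by rewrite /= inE.
  by exists 0; rewrite ?b0 // /unit_seg_ho /= lexx ltr01.
have [hxy Uxy] := hg (x1, y) (OU _ Ox1).
split; first exact: OM.
exists U, h, g; split=> //; rewrite hxy /=.
exists N, O, b, [set: 'I_N]%SET; split=> //.
split.
- by rewrite cardsT card_ord.
- move=> t; split; first by case=> _ [].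
  by move=> st; split; [exact: in_chart | split].
- move=> z [t [_ [Oz _]]]; exists [set: 'I_N]%SET; split=> //.
    by rewrite cardsT card_ord.
  move=> t'; split; first by case=> _ [].
  by move=> st; split; [exact: in_chart | split].
Qed.

End Bundle.

Unset Implicit Arguments.
Set Strict Implicit.
Local Close Scope ring_scope.

Theorem lemma9 (R : realType) (E B G : pseudoMetricType R) (p : E -> B)
    (M : set E) :
  @compact_graph_bundle R E B G p ->
  compact M ->
  @End_s R E B G p M = M ->
  interior (closure M) = set0.
Proof.
move=> [[hE _] _ [hG gG] _ triv] cM EM.
rewrite -((closure_id M).1 (compact_closed hE cM)).
apply/seteqP; split=> // x Mx; exfalso.
have [U [h [g [Upx tr]]]] := triv (p x).
have Uhx : U (h x).1 by rewrite tr.2.1.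
have [A1 [A2 [nA1 nA2 boxM]]] := nbhs_prod_box (local_triv_nbhs tr Upx Mx).
have [y [b [oy sb ob bA2]]] := graph_open_star_nbhs hG gG nA2.
set O := U `&` A1°.
have oO : open O := openI tr.1 (@open_interior _ _).
have OU : O `<=` U by move=> ? [].
have Ox : O (h x).1 by split.
have OM z t : O z -> open_star b t -> M (g (z, t)).
  move=> [_ /interior_subset A1z] /bA2 A2t.
  by have [] := boxM (z, t) (conj A1z A2t).
have Lint_y := Lint_s_product_star tr oO OU Ox oy isT sb ob OM.
have : @End_s R E B G p M (g ((h x).1, y)) by rewrite EM; exact: Lint_y.1.
by case.
Qed.
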